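(* Let $\|\cdot\|_X$ be a strictly convex norm on $X=\mathbb{R}^2$. Let $x,y,z\in S_X$ and $\lambda\in\,]0,2[$ satisfy $z=y+\lambda x$, and assume $\|\cdot\|_X$ is differentiable at $z$. Then $\|\cdot\|_X$ is differentiable at $x$ if and only if the function $G:\mathbb{R}\to\mathbb{R}$, $G(t)=\|\gamma_z(t)-y\|_X$, is differentiable at $t=0$.
   Context: Fix the anticlockwise orientation of $\mathbb{R}^2$. For a point $z$ on a convex, piecewise $C^1$ Jordan curve $C\subset X$ of $\|\cdot\|_X$-length $L$ (here $C=S_X$), $\gamma_z:\mathbb{R}\to C$ denotes the natural (arc-length) parameterization: the unique anticlockwise, $L$-periodic map with $\gamma_z(0)=z$, injective on $[0,L)$, having one-sided derivatives $\gamma'_{z,-}(t),\gamma'_{z,+}(t)$ at every $t$ with $\|\gamma'_{z,-}(t)\|_X=\|\gamma'_{z,+}(t)\|_X=1$. A norm is strictly convex if its unit sphere contains no nontrivial segment. *)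

(* The plane X = R^2 is modelled as R * R (Coquelicot's product normed module;
   its built-in norm is only used for the topology, which is the same for all
   norms on R^2). *)
From Stdlib Require Import Reals Lra List Sorted.
From Coquelicot Require Import Coquelicot.
Open Scope R_scope.

Record is_norm (N : R * R -> R) : Prop := {
  norm_definite : forall u : R * R, N u = 0 -> u = (0, 0);
  norm_homogeneous : forall (a : R) (u : R * R), N (scal a u) = Rabs a * N u;
  norm_triangle : forall u v : R * R, N (plus u v) <= N u + N v
}.

Definition strictly_convex (N : R * R -> R) : Prop :=
  forall u v : R * R, N u = 1 -> N v = 1 ->
    (forall s, 0 <= s <= 1 -> N (plus (scal (1 - s) u) (scal s v)) = 1) ->
    u = v.

Definition det (u v : R * R) : R := fst u * snd v - snd u * fst v.

Definition right_deriv (g : R -> R * R) (t : R) (d : R * R) : Prop :=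
  filterlim (fun h => scal (/ h) (minus (g (t + h)) (g t))) (at_right 0) (locally d).
Definition left_deriv (g : R -> R * R) (t : R) (d : R * R) : Prop :=
  filterlim (fun h => scal (/ h) (minus (g (t + h)) (g t))) (at_left 0) (locally d).

Fixpoint poly_len (N : R * R -> R) (g : R -> R * R) (l : list R) : R :=
  match l with
  | a :: ((b :: _) as tl) => N (minus (g b) (g a)) + poly_len N g tl
  | _ => 0
  end.

Definition partition (a b : R) (l : list R) : Prop :=
  hd 0 l = a /\ last l 0 = b /\ Sorted Rle l.

Definition curve_length (N : R * R -> R) (g : R -> R * R) (a b Lg : R) : Prop :=
  is_lub (fun s => exists l, partition a b l /\ s = poly_len N g l) Lg.

(** g is the natural (arc-length) parameterization gamma_z of the unit sphere
    S_X = {p | N p = 1}, of N-length L:  anticlockwise, L-periodic, g 0 = z,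
    a bijection from [0,L) onto S_X, with one-sided derivatives of N-norm 1
    everywhere.  Anticlockwise orientation (about the origin, which lies in the
    interior of S_X) is expressed by det(g t, g'_(+/-)(t)) > 0. *)
Definition natural_param (N : R * R -> R) (z : R * R) (L : R) (g : R -> R * R) : Prop :=
  0 < L /\
  g 0 = z /\
  (forall t, g (t + L) = g t) /\
  (forall t, N (g t) = 1) /\
  (forall p, N p = 1 -> exists t, 0 <= t < L /\ g t = p) /\
  (forall s t, 0 <= s < L -> 0 <= t < L -> g s = g t -> s = t) /\
  curve_length N g 0 L L /\
  (forall t, exists dm dp,
      left_deriv g t dm /\ right_deriv g t dp /\ N dm = 1 /\ N dp = 1 /\
      0 < det (g t) dm /\ 0 < det (g t) dp).

From Pilot Require Import Defs.
From Stdlib Require Import Reals Lra.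
From Coquelicot Require Import Coquelicot.
Open Scope R_scope.

(** Let [(a,b)] be the gradient of the norm [N] at the smooth point [z].
    - Geometry at [z]: the left and right unit tangents of [gamma_z] at [0]
      both annihilate [(a,b)] (the norm is constant along the curve), have the
      same orientation, hence coincide; so [gamma_z t = z + t p + o(t)] with
      [a.p = 0].  By strict convexity the supporting line [a.u = 1] touches
      the sphere only at [z]; since [y] is on the sphere, [a.x <> 0], so [p]
      is transversal to [x].
    - Analysis at [x]: [G t = N (gamma_z t - y) = N (lam x + t p) + o(t)
      = lam N (x + (t/lam) p) + o(t)], so [G] is differentiable at [0] iff
      [s |-> N (x + s p)] is differentiable at [0].  A convex, positively
      homogeneous function differentiable along a direction transversal to
      [x] is differentiable at [x] (and conversely by the chain rule). *)

Section NormFacts.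

Variable N : R * R -> R.
Hypothesis HN : is_norm N.

Lemma norm_scal a u1 u2 : N (a * u1, a * u2) = Rabs a * N (u1, u2).
Proof. exact (Defs.norm_homogeneous N HN a (u1, u2)). Qed.

Lemma norm_add u1 u2 v1 v2 : N (u1 + v1, u2 + v2) <= N (u1, u2) + N (v1, v2).
Proof. exact (Defs.norm_triangle N HN (u1, u2) (v1, v2)). Qed.

Lemma norm_origin : N (0, 0) = 0.
Proof.
replace (0, 0) with (0 * 0, 0 * 0) by (f_equal; ring).
rewrite norm_scal, Rabs_R0; ring.
Qed.

Lemma norm_opp u1 u2 : N (- u1, - u2) = N (u1, u2).
Proof.
replace (- u1, - u2) with (-1 * u1, -1 * u2) by (f_equal; ring).
rewrite norm_scal, Rabs_m1; ring.
Qed.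

Lemma norm_nonneg u1 u2 : 0 <= N (u1, u2).
Proof.
pose proof (norm_add u1 u2 (- u1) (- u2)) as H.
rewrite norm_opp in H.
replace (u1 + - u1, u2 + - u2) with (0, 0) in H by (f_equal; ring).
rewrite norm_origin in H; lra.
Qed.

Lemma unit_nonzero u1 u2 : N (u1, u2) = 1 -> u1 <> 0 \/ u2 <> 0.
Proof.
intros Hu. destruct (Req_dec u1 0) as [->|]; [|now left].
destruct (Req_dec u2 0) as [->|]; [|now right].
rewrite norm_origin in Hu; lra.
Qed.

Lemma norm_convex p q u1 u2 v1 v2 : 0 <= p -> 0 <= q ->
  N (p * u1 + q * v1, p * u2 + q * v2) <= p * N (u1, u2) + q * N (v1, v2).
Proof.
intros Hp Hq. eapply Rle_trans; [apply norm_add|].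
rewrite !norm_scal, !Rabs_pos_eq by lra. lra.
Qed.

(** The norm is Lipschitz for the l1 distance, with constant [N e1 + N e2]. *)
Definition lip_const := N (1, 0) + N (0, 1).

Lemma lip_const_nonneg : 0 <= lip_const.
Proof. pose proof (norm_nonneg 1 0); pose proof (norm_nonneg 0 1). unfold lip_const; lra. Qed.

Lemma norm_le_l1 u1 u2 : N (u1, u2) <= lip_const * (Rabs u1 + Rabs u2).
Proof.
replace (u1, u2) with (u1 * 1 + u2 * 0, u1 * 0 + u2 * 1) by (f_equal; ring).
eapply Rle_trans; [apply norm_add|]. rewrite !norm_scal.
pose proof (norm_nonneg 1 0); pose proof (norm_nonneg 0 1).
pose proof (Rabs_pos u1); pose proof (Rabs_pos u2). unfold lip_const; nra.
Qed.

Lemma norm_lipschitz u1 u2 v1 v2 :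
  Rabs (N (u1, u2) - N (v1, v2)) <= lip_const * (Rabs (u1 - v1) + Rabs (u2 - v2)).
Proof.
pose proof (norm_add (u1 - v1) (u2 - v2) v1 v2) as H1.
pose proof (norm_add (v1 - u1) (v2 - u2) u1 u2) as H2.
replace (u1 - v1 + v1, u2 - v2 + v2) with (u1, u2) in H1 by (f_equal; ring).
replace (v1 - u1 + u1, v2 - u2 + u2) with (v1, v2) in H2 by (f_equal; ring).
replace (v1 - u1, v2 - u2) with (- (u1 - v1), - (u2 - v2)) in H2 by (f_equal; ring).
rewrite norm_opp in H2. pose proof (norm_le_l1 (u1 - v1) (u2 - v2)).
apply Rabs_le; lra.
Qed.

End NormFacts.

Lemma Rle_slack x y C : (forall eps, 0 < eps -> x <= y + eps * C) -> x <= y.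
Proof.
intros H. apply Rle_plus_epsilon. intros eps Heps.
pose proof (Rabs_pos C).
assert (Hpos : 0 < eps / (Rabs C + 1)) by (apply Rdiv_lt_0_compat; lra).
specialize (H _ Hpos).
assert (Hslack : eps / (Rabs C + 1) * C <= eps / (Rabs C + 1) * (Rabs C + 1)).
{ apply Rmult_le_compat_l; [lra|]. pose proof (Rle_abs C); lra. }
replace (eps / (Rabs C + 1) * (Rabs C + 1)) with eps in Hslack by (field; lra). lra.
Qed.

Lemma Rabs_le_slack_0 v C : (forall eps, 0 < eps -> Rabs v <= eps * C) -> v = 0.
Proof.
intros H. apply Rabs_eq_0, Rle_antisym; [|apply Rabs_pos].
apply (Rle_slack _ 0 C). intros eps Heps. rewrite Rplus_0_l. auto.
Qed.

Lemma Rabs_lin_le a b u1 u2 : Rabs (a * u1 + b * u2) <= (Rabs a + Rabs b) * (Rabs u1 + Rabs u2).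
Proof.
eapply Rle_trans; [apply Rabs_triang|]. rewrite !Rabs_mult.
pose proof (Rabs_pos a); pose proof (Rabs_pos b); pose proof (Rabs_pos u1); pose proof (Rabs_pos u2).
nra.
Qed.

(** [has_gradient f p1 p2 a b]: the function [f] on R^2 is (Frechet)
    differentiable at [(p1,p2)] with gradient [(a,b)], stated with the l1 norm
    (all norms on R^2 being equivalent). *)
Definition has_gradient (f : R * R -> R) p1 p2 a b :=
  forall eps, 0 < eps -> exists del, 0 < del /\
    forall h1 h2, Rabs h1 + Rabs h2 < del ->
      Rabs (f (p1 + h1, p2 + h2) - f (p1, p2) - (a * h1 + b * h2)) <= eps * (Rabs h1 + Rabs h2).

Lemma euclid_le_l1 u1 u2 : norm ((u1, u2) : R * R) <= Rabs u1 + Rabs u2.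
Proof.
change (norm (u1, u2)) with (sqrt (Rabs u1 ^ 2 + Rabs u2 ^ 2)).
pose proof (Rabs_pos u1); pose proof (Rabs_pos u2).
rewrite <- (sqrt_pow2 (Rabs u1 + Rabs u2)) by lra.
apply sqrt_le_1_alt. nra.
Qed.

Lemma l1_le_euclid u1 u2 : Rabs u1 + Rabs u2 <= 2 * norm ((u1, u2) : R * R).
Proof.
change (norm (u1, u2)) with (sqrt (Rabs u1 ^ 2 + Rabs u2 ^ 2)).
destruct (sqrt_plus_sqr (Rabs u1) (Rabs u2)) as [H _].
rewrite !Rabs_Rabsolu in H.
pose proof (Rmax_l (Rabs u1) (Rabs u2)); pose proof (Rmax_r (Rabs u1) (Rabs u2)). lra.
Qed.

Lemma gradient_of_filterdiff (f : R * R -> R) p1 p2 :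
  ex_filterdiff f (locally (p1, p2)) -> exists a b, has_gradient f p1 p2 a b.
Proof.
intros [l [Hl Hd]].
assert (Hcoord : forall h1 h2, l (h1, h2) = h1 * l (1, 0) + h2 * l (0, 1)).
{ intros h1 h2.
  replace (h1, h2) with (plus (scal h1 (1, 0)) (scal h2 ((0, 1) : R * R))).
  - rewrite (linear_plus l Hl), !(linear_scal l Hl). reflexivity.
  - unfold plus, scal; simpl. unfold prod_plus, prod_scal; simpl.
    unfold plus, scal; simpl. unfold mult; simpl. f_equal; ring. }
exists (l (1, 0)), (l (0, 1)). intros eps Heps.
assert (Hp : is_filter_lim (locally (p1, p2)) (p1, p2)) by (intros P HP; exact HP).
destruct (Hd _ Hp (mkposreal (eps / 2) ltac:(lra))) as [del Hdel].
exists del. split; [apply cond_pos|]. intros h1 h2 Hh.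
pose proof (Rabs_pos h1); pose proof (Rabs_pos h2).
assert (Hb : ball (p1, p2) del (p1 + h1, p2 + h2)).
{ split; simpl; unfold ball; simpl; unfold AbsRing_ball, abs, minus, plus, opp; simpl.
  - replace (p1 + h1 + - p1) with h1 by ring. lra.
  - replace (p2 + h2 + - p2) with h2 by ring. lra. }
specialize (Hdel _ Hb). simpl in Hdel.
change (minus (p1 + h1, p2 + h2) (p1, p2)) with (p1 + h1 + - p1, p2 + h2 + - p2) in Hdel.
replace (p1 + h1 + - p1) with h1 in Hdel by ring.
replace (p2 + h2 + - p2) with h2 in Hdel by ring.
rewrite Hcoord in Hdel.
change (norm (minus (minus (f (p1 + h1, p2 + h2)) (f (p1, p2))) (h1 * l (1, 0) + h2 * l (0, 1))))
  with (Rabs (f (p1 + h1, p2 + h2) - f (p1, p2) - (h1 * l (1, 0) + h2 * l (0, 1)))) in Hdel.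
replace (l (1, 0) * h1 + l (0, 1) * h2) with (h1 * l (1, 0) + h2 * l (0, 1)) by ring.
eapply Rle_trans; [exact Hdel|].
apply Rle_trans with (eps / 2 * (Rabs h1 + Rabs h2)).
- apply Rmult_le_compat_l; [lra|apply euclid_le_l1].
- nra.
Qed.

Lemma filterdiff_of_gradient (f : R * R -> R) p1 p2 a b :
  has_gradient f p1 p2 a b -> ex_filterdiff f (locally (p1, p2)).
Proof.
intros Hgrad. exists (fun h : R * R => a * fst h + b * snd h). split.
- split.
  + intros [u1 u2] [v1 v2]. simpl. unfold plus; simpl. unfold prod_plus; simpl.
    unfold plus; simpl. ring.
  + intros k [u1 u2]. unfold scal; simpl. unfold prod_scal; simpl.
    unfold scal; simpl. unfold mult; simpl. ring.
  + exists (2 * (Rabs a + Rabs b) + 1).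
    split; [pose proof (Rabs_pos a); pose proof (Rabs_pos b); lra|].
    intros [u1 u2]. simpl. change (norm (a * u1 + b * u2)) with (Rabs (a * u1 + b * u2)).
    pose proof (l1_le_euclid u1 u2) as Hl1.
    pose proof (Rabs_lin_le a b u1 u2); pose proof (Rabs_pos a); pose proof (Rabs_pos b).
    pose proof (Rabs_pos u1); pose proof (Rabs_pos u2).
    assert ((Rabs a + Rabs b) * (Rabs u1 + Rabs u2)
            <= (Rabs a + Rabs b) * (2 * norm ((u1, u2) : R * R)))
      by (apply Rmult_le_compat_l; [lra|exact Hl1]).
    nra.
- intros q Hq.
  apply (@is_filter_lim_locally_unique R_AbsRing
           (prod_NormedModule R_AbsRing R_NormedModule R_NormedModule)) in Hq.
  subst q. intros eps. pose proof (cond_pos eps) as Heps.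
  destruct (Hgrad (eps / 2) ltac:(lra)) as [del [Hdel Hest]].
  exists (mkposreal (del / 2) ltac:(lra)). intros [u1 u2] [Hu1 Hu2]. change R in u1, u2.
  simpl in Hu1, Hu2. unfold ball in Hu1, Hu2; simpl in Hu1, Hu2.
  unfold AbsRing_ball, abs, minus, plus, opp in Hu1, Hu2; simpl in Hu1, Hu2.
  specialize (Hest (u1 + - p1) (u2 + - p2) ltac:(lra)).
  replace (p1 + (u1 + - p1), p2 + (u2 + - p2)) with (u1, u2) in Hest by (f_equal; ring).
  change (norm (minus (minus (f (u1, u2)) (f (p1, p2)))
                 (a * fst (minus (u1, u2) (p1, p2)) + b * snd (minus (u1, u2) (p1, p2)))))
    with (Rabs (f (u1, u2) - f (p1, p2) - (a * (u1 + - p1) + b * (u2 + - p2)))).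
  change (norm (minus (u1, u2) (p1, p2))) with (norm (u1 + - p1, u2 + - p2)).
  pose proof (l1_le_euclid (u1 + - p1) (u2 + - p2)). nra.
Qed.

Lemma filterdiff_iff_gradient (f : R * R -> R) p1 p2 :
  ex_filterdiff f (locally (p1, p2)) <-> exists a b, has_gradient f p1 p2 a b.
Proof.
split; [apply gradient_of_filterdiff|]. intros [a [b H]]. exact (filterdiff_of_gradient f p1 p2 a b H).
Qed.

Definition has_deriv0 (f : R -> R) c :=
  forall eps, 0 < eps -> exists del, 0 < del /\
    forall t, Rabs t < del -> Rabs (f t - f 0 - c * t) <= eps * Rabs t.

Lemma ex_derive0_iff f : ex_derive f 0 <-> exists c, has_deriv0 f c.
Proof.
split.
- intros [c Hc]. exists c. apply is_derive_Reals in Hc. intros eps Heps.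
  destruct (Hc eps Heps) as [del Hd]. exists del. split; [apply cond_pos|].
  intros t Ht. destruct (Req_dec t 0) as [->|Ht0].
  + rewrite Rabs_R0. replace (f 0 - f 0 - c * 0) with 0 by ring. rewrite Rabs_R0; lra.
  + specialize (Hd t Ht0 Ht). rewrite Rplus_0_l in Hd.
    replace (f t - f 0 - c * t) with (((f t - f 0) / t - c) * t) by (field; auto).
    rewrite Rabs_mult. apply Rmult_le_compat_r; [apply Rabs_pos|lra].
- intros [c Hc]. exists c. apply is_derive_Reals. intros eps Heps.
  destruct (Hc (eps / 2) ltac:(lra)) as [del [Hdel Hd]]. exists (mkposreal del Hdel).
  intros h Hh0 Hh. simpl in Hh. rewrite Rplus_0_l. specialize (Hd h Hh).
  replace ((f h - f 0) / h - c) with ((f h - f 0 - c * h) / h) by (field; auto).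
  unfold Rdiv. rewrite Rabs_mult, Rabs_inv. pose proof (Rabs_pos_lt h Hh0).
  apply (Rmult_lt_reg_r (Rabs h)); auto. rewrite Rmult_assoc, Rinv_l by lra. nra.
Qed.

Lemma has_deriv0_ext f h c : (forall t, f t = h t) -> has_deriv0 f c -> has_deriv0 h c.
Proof.
intros Hfh Hf eps Heps. destruct (Hf eps Heps) as [del [Hdel Hd]].
exists del. split; [exact Hdel|]. intros t Ht. rewrite <- !Hfh. auto.
Qed.

Definition first_order_eq (f h : R -> R) :=
  forall eps, 0 < eps -> exists del, 0 < del /\
    forall t, Rabs t < del -> Rabs (f t - h t) <= eps * Rabs t.

Lemma first_order_eq_sym f h : first_order_eq f h -> first_order_eq h f.
Proof.
intros Hfh eps Heps. destruct (Hfh eps Heps) as [del [Hdel Hd]].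
exists del. split; [exact Hdel|]. intros t Ht. rewrite Rabs_minus_sym. auto.
Qed.

Lemma has_deriv0_first_order f h c : first_order_eq f h -> has_deriv0 f c -> has_deriv0 h c.
Proof.
intros Hfh Hf eps Heps.
destruct (Hf (eps / 2) ltac:(lra)) as [del1 [Hdel1 Hd1]].
destruct (Hfh (eps / 2) ltac:(lra)) as [del2 [Hdel2 Hd2]].
assert (Hf0 : f 0 = h 0).
{ specialize (Hd2 0 ltac:(rewrite Rabs_R0; lra)). rewrite Rabs_R0, Rmult_0_r in Hd2.
  pose proof (Rabs_pos (f 0 - h 0)). apply Rminus_diag_uniq, Rabs_eq_0. lra. }
exists (Rmin del1 del2). split; [now apply Rmin_pos|]. intros t Ht.
pose proof (Rmin_l del1 del2); pose proof (Rmin_r del1 del2).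
specialize (Hd1 t ltac:(lra)). specialize (Hd2 t ltac:(lra)).
rewrite Rabs_minus_sym in Hd2. rewrite <- Hf0.
pose proof (Rabs_triang (h t - f t) (f t - f 0 - c * t)) as Htri.
replace (h t - f t + (f t - f 0 - c * t)) with (h t - f 0 - c * t) in Htri by ring.
lra.
Qed.

Lemma has_deriv0_rescale f c lam : 0 < lam ->
  has_deriv0 f c -> has_deriv0 (fun t => lam * f (t / lam)) c.
Proof.
intros Hlam Hf eps Heps. destruct (Hf eps Heps) as [del [Hdel Hd]].
exists (lam * del). split; [nra|]. intros t Ht.
assert (Hs : Rabs (t / lam) < del).
{ rewrite Rabs_div, (Rabs_pos_eq lam) by lra.
  apply (Rmult_lt_reg_l lam); [lra|]. field_simplify; lra. }
specialize (Hd _ Hs). unfold Rdiv in Hd |- *. rewrite Rmult_0_l.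
replace (lam * f (t * / lam) - lam * f 0 - c * t)
  with (lam * (f (t * / lam) - f 0 - c * (t * / lam))) by (field; lra).
rewrite Rabs_mult, (Rabs_pos_eq lam) by lra.
rewrite Rabs_mult, Rabs_inv, (Rabs_pos_eq lam) in Hd by lra.
apply Rle_trans with (lam * (eps * (Rabs t * / lam))).
- apply Rmult_le_compat_l; lra.
- right. field. lra.
Qed.

Lemma has_deriv0_rescale_iff f c lam : 0 < lam ->
  has_deriv0 (fun t => lam * f (t / lam)) c <-> has_deriv0 f c.
Proof.
intros Hlam. split; [|apply has_deriv0_rescale; exact Hlam].
intros Hscaled. apply (has_deriv0_rescale _ _ (/ lam)) in Hscaled; [|now apply Rinv_0_lt_compat].
revert Hscaled. apply has_deriv0_ext. intros t.
replace (t / / lam / lam) with t by (field; lra). field. lra.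
Qed.

(** * Tangent vectors of plane curves *)
Definition tangent_on (P : R -> Prop) (g1 g2 : R -> R) z1 z2 d1 d2 :=
  forall eps, 0 < eps -> exists del, 0 < del /\
    forall t, P t -> Rabs t < del ->
      Rabs (g1 t - z1 - t * d1) + Rabs (g2 t - z2 - t * d2) <= eps * Rabs t.

Lemma tangent_of_quotient_limit (g : R -> R * R) (P : R -> Prop) (d : R * R) :
  (forall t, P t -> t <> 0) ->
  filterlim (fun h => scal (/ h) (minus (g (0 + h)) (g 0))) (within P (locally 0)) (locally d) ->
  tangent_on P (fun t => fst (g t)) (fun t => snd (g t)) (fst (g 0)) (snd (g 0)) (fst d) (snd d).
Proof.
intros HP Hlim eps Heps.
destruct (Hlim _ (locally_ball d (mkposreal (eps / 2) ltac:(lra)))) as [del Hdel].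
exists del. split; [apply cond_pos|]. intros t Pt Ht.
assert (Ht0 := HP t Pt).
assert (Hb : ball 0 del t).
{ unfold ball; simpl. unfold AbsRing_ball, abs, minus, plus, opp; simpl.
  rewrite Ropp_0, Rplus_0_r; exact Ht. }
destruct (Hdel t Hb Pt) as [H1 H2]. rewrite Rplus_0_l in H1, H2.
destruct (g t) as [u1 u2], (g 0) as [v1 v2], d as [d1 d2]. simpl in *.
unfold ball in H1, H2; simpl in H1, H2.
unfold AbsRing_ball, abs, minus, plus, opp, scal in H1, H2; simpl in H1, H2.
change mult with Rmult in H1, H2.
replace (u1 - v1 - t * d1) with (t * (/ t * (u1 + - v1) + - d1)) by (field; exact Ht0).
replace (u2 - v2 - t * d2) with (t * (/ t * (u2 + - v2) + - d2)) by (field; exact Ht0).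
rewrite !Rabs_mult. pose proof (Rabs_pos t). nra.
Qed.

Lemma tangent_two_sided g1 g2 z1 z2 d1 d2 : g1 0 = z1 -> g2 0 = z2 ->
  tangent_on (fun t => 0 < t) g1 g2 z1 z2 d1 d2 ->
  tangent_on (fun t => t < 0) g1 g2 z1 z2 d1 d2 ->
  tangent_on (fun _ => True) g1 g2 z1 z2 d1 d2.
Proof.
intros Hz1 Hz2 Hright Hleft eps Heps.
destruct (Hright eps Heps) as [del1 [Hdel1 Hd1]].
destruct (Hleft eps Heps) as [del2 [Hdel2 Hd2]].
exists (Rmin del1 del2). split; [now apply Rmin_pos|].
pose proof (Rmin_l del1 del2); pose proof (Rmin_r del1 del2).
intros t _ Ht. destruct (Rtotal_order t 0) as [Hneg|[->|Hpos]].
- apply Hd2; lra.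
- rewrite Hz1, Hz2, !Rmult_0_l, Rabs_R0, !Rminus_0_r, !Rminus_diag, Rabs_R0. lra.
- apply Hd1; lra.
Qed.

Lemma gradient_orthogonal_to_tangent f z1 z2 a b (P : R -> Prop) g1 g2 d1 d2 :
  has_gradient f z1 z2 a b ->
  (forall t, f (g1 t, g2 t) = f (z1, z2)) ->
  (forall del, 0 < del -> exists t, P t /\ 0 < Rabs t < del) ->
  tangent_on P g1 g2 z1 z2 d1 d2 ->
  a * d1 + b * d2 = 0.
Proof.
intros Hgrad Hlevel HP Htan.
set (A := Rabs a + Rabs b). set (M := Rabs d1 + Rabs d2 + 1).
pose proof (Rabs_pos a); pose proof (Rabs_pos b); pose proof (Rabs_pos d1); pose proof (Rabs_pos d2).
apply (Rabs_le_slack_0 _ (A + M)). intros eps Heps.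
set (e := Rmin eps 1).
assert (He : 0 < e) by (apply Rmin_pos; lra).
assert (He_eps : e <= eps) by apply Rmin_l.
assert (He1 : e <= 1) by apply Rmin_r.
destruct (Hgrad e He) as [del1 [Hdel1 Hd1]].
destruct (Htan e He) as [del2 [Hdel2 Hd2]].
destruct (HP (Rmin del2 (del1 / M))) as [t [Pt [Ht0 Ht]]].
{ apply Rmin_pos; [lra|]. apply Rdiv_lt_0_compat; unfold M; lra. }
pose proof (Rmin_l del2 (del1 / M)); pose proof (Rmin_r del2 (del1 / M)).
specialize (Hd2 t Pt ltac:(lra)).
set (h1 := g1 t - z1) in *. set (h2 := g2 t - z2) in *.
(* the increment [h] is [t d] up to [e |t|] *)
assert (Hh : Rabs h1 + Rabs h2 <= Rabs t * M).
{ pose proof (Rabs_triang (t * d1) (h1 - t * d1)); pose proof (Rabs_triang (t * d2) (h2 - t * d2)).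
  replace (t * d1 + (h1 - t * d1)) with h1 in * by ring.
  replace (t * d2 + (h2 - t * d2)) with h2 in * by ring.
  rewrite !Rabs_mult in *.
  assert (e * Rabs t <= Rabs t) by nra. unfold M. lra. }
assert (HtM : Rabs t * M < del1).
{ assert (Ht1 : Rabs t < del1 / M) by lra.
  apply (Rmult_lt_compat_r M) in Ht1; [|unfold M; lra].
  replace (del1 / M * M) with del1 in Ht1 by (field; unfold M; lra). exact Ht1. }
specialize (Hd1 h1 h2 ltac:(lra)).
replace (z1 + h1, z2 + h2) with (g1 t, g2 t) in Hd1 by (unfold h1, h2; f_equal; ring).
rewrite Hlevel, Rminus_diag, Rminus_0_l, Rabs_Ropp in Hd1.
(* hence [|t (a.d)| <= |a.h| + |a.(h - t d)| <= e |t| (M + A)] *)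
pose proof (Rabs_lin_le a b (h1 - t * d1) (h2 - t * d2)) as Herr.
pose proof (Rabs_triang (a * h1 + b * h2) (- (a * (h1 - t * d1) + b * (h2 - t * d2)))) as Htri.
replace (a * h1 + b * h2 + - (a * (h1 - t * d1) + b * (h2 - t * d2))) with (t * (a * d1 + b * d2))
  in Htri by ring.
rewrite Rabs_Ropp, Rabs_mult in Htri. fold A in Herr.
assert (Hsmall : Rabs t * Rabs (a * d1 + b * d2) <= Rabs t * (e * (A + M))).
{ assert (e * (Rabs h1 + Rabs h2) <= e * (Rabs t * M)) by (apply Rmult_le_compat_l; lra).
  assert (A * (Rabs (h1 - t * d1) + Rabs (h2 - t * d2)) <= A * (e * Rabs t))
    by (apply Rmult_le_compat_l; unfold A; lra).
  nra. }
apply Rmult_le_reg_l in Hsmall; [|lra].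
apply (Rle_trans _ _ _ Hsmall). apply Rmult_le_compat_r; unfold A, M; lra.
Qed.

(** * Convexity at a point of differentiability of the norm *)

Lemma gradient_is_subgradient N z1 z2 a b : is_norm N -> has_gradient N z1 z2 a b ->
  forall h1 h2, N (z1, z2) + (a * h1 + b * h2) <= N (z1 + h1, z2 + h2).
Proof.
intros HN Hgrad h1 h2.
set (m := Rabs h1 + Rabs h2). pose proof (Rabs_pos h1); pose proof (Rabs_pos h2).
cut (a * h1 + b * h2 <= N (z1 + h1, z2 + h2) - N (z1, z2)); [lra|].
apply (Rle_slack _ _ m). intros eps Heps.
destruct (Hgrad eps Heps) as [del [Hdel Hd]].
(* compare at the point [z + s h], with [s] small *)
set (s := Rmin 1 (del / (2 * (m + 1)))).
assert (Hs0 : 0 < s) by (apply Rmin_pos; [lra|]; apply Rdiv_lt_0_compat; unfold m; lra).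
assert (Hs1 : s <= 1) by apply Rmin_l.
assert (Hsm : s * m < del).
{ assert (Hs2 : s <= del / (2 * (m + 1))) by apply Rmin_r.
  apply (Rmult_le_compat_r (m + 1)) in Hs2; [|unfold m; lra].
  replace (del / (2 * (m + 1)) * (m + 1)) with (del / 2) in Hs2 by (field; unfold m; lra).
  nra. }
specialize (Hd (s * h1) (s * h2)).
rewrite !Rabs_mult, (Rabs_pos_eq s) in Hd by lra.
specialize (Hd ltac:(unfold m in Hsm; lra)).
pose proof (Rle_abs (- (N (z1 + s * h1, z2 + s * h2) - N (z1, z2) - (a * (s * h1) + b * (s * h2)))))
  as Hlow.
rewrite Rabs_Ropp in Hlow.
pose proof (norm_convex N HN (1 - s) s z1 z2 (z1 + h1) (z2 + h2) ltac:(lra) ltac:(lra)) as Hconv.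
replace ((1 - s) * z1 + s * (z1 + h1), (1 - s) * z2 + s * (z2 + h2))
  with (z1 + s * h1, z2 + s * h2) in Hconv by (f_equal; ring).
apply (Rmult_le_reg_l s); [exact Hs0|]. unfold m in *. nra.
Qed.

(** Euler's identity for the positively homogeneous function [N]. *)
Lemma gradient_euler N z1 z2 a b : is_norm N -> has_gradient N z1 z2 a b ->
  a * z1 + b * z2 = N (z1, z2).
Proof.
intros HN Hgrad.
pose proof (gradient_is_subgradient N z1 z2 a b HN Hgrad z1 z2) as Hdouble.
pose proof (gradient_is_subgradient N z1 z2 a b HN Hgrad (- z1 / 2) (- z2 / 2)) as Hhalf.
replace (z1 + z1, z2 + z2) with (2 * z1, 2 * z2) in Hdouble by (f_equal; ring).
replace (z1 + - z1 / 2, z2 + - z2 / 2) with (/ 2 * z1, / 2 * z2) in Hhalf by (f_equal; field).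
rewrite norm_scal, Rabs_pos_eq in Hdouble, Hhalf by (auto; lra). lra.
Qed.

Lemma supporting_line_meets_sphere_once N z1 z2 y1 y2 a b :
  is_norm N -> strictly_convex N -> N (z1, z2) = 1 -> N (y1, y2) = 1 ->
  has_gradient N z1 z2 a b -> a * (y1 - z1) + b * (y2 - z2) = 0 ->
  (z1, z2) = (y1, y2).
Proof.
intros HN HSC Hz Hy Hgrad Hline. apply HSC; auto. intros s Hs.
change (plus (scal (1 - s) (z1, z2)) (scal s (y1, y2)))
  with ((1 - s) * z1 + s * y1, (1 - s) * z2 + s * y2).
apply Rle_antisym.
- eapply Rle_trans; [apply norm_convex; auto; lra|]. rewrite Hz, Hy. lra.
- pose proof (gradient_is_subgradient N z1 z2 a b HN Hgrad (s * (y1 - z1)) (s * (y2 - z2))) as Hsub.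
  replace (z1 + s * (y1 - z1), z2 + s * (y2 - z2))
    with ((1 - s) * z1 + s * y1, (1 - s) * z2 + s * y2) in Hsub by (f_equal; ring).
  replace (a * (s * (y1 - z1)) + b * (s * (y2 - z2))) with (s * (a * (y1 - z1) + b * (y2 - z2)))
    in Hsub by ring.
  rewrite Hline, Hz in Hsub. lra.
Qed.

Lemma common_annihilator_collinear a b p1 p2 m1 m2 :
  (a <> 0 \/ b <> 0) -> (p1 <> 0 \/ p2 <> 0) ->
  a * p1 + b * p2 = 0 -> a * m1 + b * m2 = 0 ->
  exists c, m1 = c * p1 /\ m2 = c * p2.
Proof.
intros Hab Hp Hap Ham.
assert (Hdet : m1 * p2 - m2 * p1 = 0).
{ destruct Hab as [Ha|Hb].
  - apply (Rmult_eq_reg_l a); [|exact Ha].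
    replace (a * (m1 * p2 - m2 * p1)) with ((a * m1) * p2 - m2 * (a * p1)) by ring.
    replace (a * m1) with (- (b * m2)) by lra. replace (a * p1) with (- (b * p2)) by lra. ring.
  - apply (Rmult_eq_reg_l b); [|exact Hb].
    replace (b * (m1 * p2 - m2 * p1)) with (m1 * (b * p2) - (b * m2) * p1) by ring.
    replace (b * m2) with (- (a * m1)) by lra. replace (b * p2) with (- (a * p1)) by lra. ring. }
destruct Hp as [Hp1|Hp2].
- exists (m1 / p1). split; [field; exact Hp1|].
  apply (Rmult_eq_reg_r p1); [|exact Hp1]. field_simplify; [lra|exact Hp1].
- exists (m2 / p2). split; [|field; exact Hp2].
  apply (Rmult_eq_reg_r p2); [|exact Hp2]. field_simplify; [lra|exact Hp2].
Qed.

(** At a point [z] of differentiability, the left and right unit tangent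
    vectors of the positively oriented sphere coincide: both lie on the
    tangent line [a.d = 0], have norm 1 and the same orientation. *)
Lemma unit_tangents_equal N z1 z2 a b p1 p2 m1 m2 : is_norm N ->
  a * z1 + b * z2 = 1 -> a * p1 + b * p2 = 0 -> a * m1 + b * m2 = 0 ->
  N (p1, p2) = 1 -> N (m1, m2) = 1 ->
  0 < det (z1, z2) (m1, m2) -> 0 < det (z1, z2) (p1, p2) ->
  m1 = p1 /\ m2 = p2.
Proof.
intros HN Hz Hap Ham Np Nm Dm Dp. unfold det in Dm, Dp; simpl in Dm, Dp.
assert (Hab : a <> 0 \/ b <> 0).
{ destruct (Req_dec a 0) as [->|Ha]; [right|now left]. intros ->. lra. }
destruct (common_annihilator_collinear a b p1 p2 m1 m2 Hab (unit_nonzero N HN p1 p2 Np) Hap Ham)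
  as [c [-> ->]].
rewrite norm_scal, Np in Nm by exact HN.
assert (Hc : 0 < c) by nra.
rewrite Rabs_pos_eq in Nm by lra. replace c with 1 by lra. split; ring.
Qed.

Lemma chord_direction_off_tangent N x1 x2 y1 y2 a b lam :
  is_norm N -> strictly_convex N -> N (x1, x2) = 1 -> N (y1, y2) = 1 ->
  N (y1 + lam * x1, y2 + lam * x2) = 1 -> 0 < lam ->
  has_gradient N (y1 + lam * x1) (y2 + lam * x2) a b ->
  a * x1 + b * x2 <> 0.
Proof.
intros HN HSC Hx Hy Hz Hlam Hgrad Hax.
assert (Hzy : (y1 + lam * x1, y2 + lam * x2) = (y1, y2)).
{ apply (supporting_line_meets_sphere_once N _ _ y1 y2 a b); auto.
  replace (a * (y1 - (y1 + lam * x1)) + b * (y2 - (y2 + lam * x2)))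
    with (- lam * (a * x1 + b * x2)) by ring.
  rewrite Hax. ring. }
injection Hzy as Ey1 Ey2.
pose proof (norm_scal N HN lam x1 x2) as Hlamx.
replace (lam * x1) with 0 in Hlamx by lra. replace (lam * x2) with 0 in Hlamx by lra.
rewrite norm_origin, Hx, Rabs_pos_eq in Hlamx by (auto; lra). lra.
Qed.

Lemma transversal_direction a b p1 p2 x1 x2 : (p1 <> 0 \/ p2 <> 0) ->
  a * p1 + b * p2 = 0 -> a * x1 + b * x2 <> 0 -> det (x1, x2) (p1, p2) <> 0.
Proof.
unfold det; simpl. intros Hp Hap Hax Hdet. apply Hax.
assert (H1 : (a * x1 + b * x2) * p1 = 0).
{ replace ((a * x1 + b * x2) * p1) with (x1 * (a * p1 + b * p2) - b * (x1 * p2 - x2 * p1)) by ring.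
  rewrite Hap, Hdet. ring. }
assert (H2 : (a * x1 + b * x2) * p2 = 0).
{ replace ((a * x1 + b * x2) * p2) with (x2 * (a * p1 + b * p2) + a * (x1 * p2 - x2 * p1)) by ring.
  rewrite Hap, Hdet. ring. }
destruct Hp as [Hp1|Hp2].
- destruct (Rmult_integral _ _ H1); [assumption|contradiction].
- destruct (Rmult_integral _ _ H2); [assumption|contradiction].
Qed.

(** * Differentiability of the norm at [x] versus along a transversal line *)

Lemma gradient_along_line f x1 x2 d1 d2 a b : has_gradient f x1 x2 a b ->
  has_deriv0 (fun s => f (x1 + s * d1, x2 + s * d2)) (a * d1 + b * d2).
Proof.
intros Hgrad eps Heps. set (M := Rabs d1 + Rabs d2 + 1).
assert (HM : 1 <= M) by (unfold M; pose proof (Rabs_pos d1); pose proof (Rabs_pos d2); lra).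
destruct (Hgrad (eps / M) ltac:(apply Rdiv_lt_0_compat; lra)) as [del [Hdel Hd]].
exists (del / M). split; [apply Rdiv_lt_0_compat; lra|].
intros t Ht. replace (x1 + 0 * d1, x2 + 0 * d2) with (x1, x2) by (f_equal; ring).
specialize (Hd (t * d1) (t * d2)). rewrite !Rabs_mult in Hd.
assert (Hs : Rabs t * Rabs d1 + Rabs t * Rabs d2 <= Rabs t * M)
  by (unfold M; pose proof (Rabs_pos t); nra).
assert (Rabs t * M < del).
{ apply (Rmult_lt_compat_r M) in Ht; [|lra].
  replace (del / M * M) with del in Ht by (field; lra). lra. }
specialize (Hd ltac:(lra)).
replace ((a * d1 + b * d2) * t) with (a * (t * d1) + b * (t * d2)) by ring.
eapply Rle_trans; [exact Hd|].
apply Rle_trans with (eps / M * (Rabs t * M)).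
- apply Rmult_le_compat_l; [apply Rdiv_le_0_compat; lra|lra].
- right. field. lra.
Qed.

Lemma cramer x1 x2 d1 d2 h1 h2 : det (x1, x2) (d1, d2) <> 0 ->
  h1 = det (h1, h2) (d1, d2) / det (x1, x2) (d1, d2) * x1
       + det (x1, x2) (h1, h2) / det (x1, x2) (d1, d2) * d1 /\
  h2 = det (h1, h2) (d1, d2) / det (x1, x2) (d1, d2) * x2
       + det (x1, x2) (h1, h2) / det (x1, x2) (d1, d2) * d2.
Proof. unfold det; simpl. intros HD. split; field; exact HD. Qed.

Lemma cramer_bound x1 x2 d1 d2 h1 h2 : det (x1, x2) (d1, d2) <> 0 ->
  Rabs (det (h1, h2) (d1, d2) / det (x1, x2) (d1, d2))
  + Rabs (det (x1, x2) (h1, h2) / det (x1, x2) (d1, d2))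
  <= (Rabs d1 + Rabs d2 + Rabs x1 + Rabs x2) / Rabs (det (x1, x2) (d1, d2)) * (Rabs h1 + Rabs h2).
Proof.
intros HD. pose proof (Rabs_pos_lt _ HD) as HDpos.
unfold det in *; simpl in *. rewrite !Rabs_div by exact HD.
pose proof (Rabs_lin_le d2 (- d1) h1 h2) as B1. pose proof (Rabs_lin_le (- x2) x1 h1 h2) as B2.
rewrite Rabs_Ropp in B1, B2.
replace (h1 * d2 - h2 * d1) with (d2 * h1 + - d1 * h2) by ring.
replace (x1 * h2 - x2 * h1) with (- x2 * h1 + x1 * h2) by ring.
apply (Rmult_le_reg_r (Rabs (x1 * d2 - x2 * d1))); [exact HDpos|].
field_simplify; lra.
Qed.

Lemma sign_choice a r : 0 < r -> exists s, Rabs s = r /\ Rabs a / r * s = a.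
Proof.
intros Hr. destruct (Rle_dec 0 a).
- exists r. rewrite !Rabs_pos_eq by lra. split; [reflexivity|field; lra].
- exists (- r). rewrite Rabs_Ropp, Rabs_pos_eq, Rabs_left by lra. split; [reflexivity|field; lra].
Qed.

(** Upper estimate of the norm near a unit vector [x], in the chart
    [(al,be) |-> x + al x + be d]: along [x] the norm is exactly [1 + al], along
    [d] it is bounded by hypothesis, and convexity interpolates. *)
Lemma norm_upper_in_chart N x1 x2 d1 d2 c eps del : is_norm N -> N (x1, x2) = 1 -> 0 <= eps ->
  (forall s, Rabs s < del -> N (x1 + s * d1, x2 + s * d2) <= 1 + c * s + eps * Rabs s) ->
  forall al be, Rabs al + Rabs be < Rmin 1 del ->
  N (x1 + (al * x1 + be * d1), x2 + (al * x2 + be * d2))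
  <= 1 + al + c * be + eps * (Rabs al + Rabs be).
Proof.
intros HN Hx Heps Hline al be Hr.
pose proof (Rabs_pos al) as Pa; pose proof (Rabs_pos be) as Pb.
set (r := Rabs al + Rabs be) in *.
pose proof (Rmin_l 1 del); pose proof (Rmin_r 1 del).
destruct (Req_dec r 0) as [Hr0|Hr0].
{ assert (al = 0) by (apply Rabs_eq_0; unfold r in Hr0; lra).
  assert (be = 0) by (apply Rabs_eq_0; unfold r in Hr0; lra). subst al be.
  replace (x1 + (0 * x1 + 0 * d1), x2 + (0 * x2 + 0 * d2)) with (x1, x2) by (f_equal; ring).
  rewrite Hx, Hr0. lra. }
assert (Hr1 : 0 < r) by (unfold r in *; lra).
destruct (sign_choice al r Hr1) as [sa [Hsa Hsa2]].
destruct (sign_choice be r Hr1) as [sb [Hsb Hsb2]].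
set (p := Rabs al / r) in *. set (q := Rabs be / r) in *.
assert (Hpq : p + q = 1) by (unfold p, q, r in *; field; lra).
assert (Hp : 0 <= p) by (unfold p; apply Rdiv_le_0_compat; lra).
assert (Hq : 0 <= q) by (unfold q; apply Rdiv_le_0_compat; lra).
(* the point is the convex combination [p (1 + sa) x + q (x + sb d)] *)
pose proof (norm_convex N HN p q ((1 + sa) * x1) ((1 + sa) * x2) (x1 + sb * d1) (x2 + sb * d2) Hp Hq)
  as Hconv.
replace (p * ((1 + sa) * x1) + q * (x1 + sb * d1), p * ((1 + sa) * x2) + q * (x2 + sb * d2))
  with (x1 + (al * x1 + be * d1), x2 + (al * x2 + be * d2)) in Hconv.
2:{ f_equal.
  - replace (p * ((1 + sa) * x1) + q * (x1 + sb * d1))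
      with ((p + q) * x1 + (p * sa) * x1 + (q * sb) * d1) by ring.
    rewrite Hpq, Hsa2, Hsb2. ring.
  - replace (p * ((1 + sa) * x2) + q * (x2 + sb * d2))
      with ((p + q) * x2 + (p * sa) * x2 + (q * sb) * d2) by ring.
    rewrite Hpq, Hsa2, Hsb2. ring. }
assert (Hsa1 : 0 <= 1 + sa) by (pose proof (Rle_abs (- sa)); rewrite Rabs_Ropp in *; lra).
rewrite norm_scal, Hx, Rabs_pos_eq in Hconv by auto.
specialize (Hline sb ltac:(lra)). rewrite Hsb in Hline.
assert (q * N (x1 + sb * d1, x2 + sb * d2) <= q * (1 + c * sb + eps * r))
  by (apply Rmult_le_compat_l; lra).
assert (q * (eps * r) <= eps * r) by (assert (0 <= eps * r) by nra; nra).
replace (q * (1 + c * sb + eps * r)) with (q + c * (q * sb) + q * (eps * r)) in * by ring.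
replace (p * ((1 + sa) * 1)) with (p + p * sa) in Hconv by ring.
rewrite Hsa2 in Hconv. rewrite Hsb2 in *. lra.
Qed.

(** Conversely to [gradient_along_line]: a norm differentiable along a line
    through the unit vector [x] transversal to [x] is differentiable at [x]
    (it is also differentiable along [x], by homogeneity, and it is convex). *)
Lemma gradient_from_line_deriv N x1 x2 d1 d2 c : is_norm N -> N (x1, x2) = 1 ->
  det (x1, x2) (d1, d2) <> 0 ->
  has_deriv0 (fun s => N (x1 + s * d1, x2 + s * d2)) c ->
  has_gradient N x1 x2 ((d2 - c * x2) / det (x1, x2) (d1, d2)) ((c * x1 - d1) / det (x1, x2) (d1, d2)).
Proof.
intros HN Hx HD Hline eps Heps.
set (C := (Rabs d1 + Rabs d2 + Rabs x1 + Rabs x2) / Rabs (det (x1, x2) (d1, d2)) + 1).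
assert (HC : 1 <= C).
{ unfold C. pose proof (Rabs_pos_lt _ HD). pose proof (Rabs_pos d1); pose proof (Rabs_pos d2).
  pose proof (Rabs_pos x1); pose proof (Rabs_pos x2).
  assert (0 <= (Rabs d1 + Rabs d2 + Rabs x1 + Rabs x2) / Rabs (det (x1, x2) (d1, d2)))
    by (apply Rdiv_le_0_compat; lra). lra. }
destruct (Hline (eps / C) ltac:(apply Rdiv_lt_0_compat; lra)) as [del [Hdel Hd]].
assert (Hupper : forall s, Rabs s < del ->
          N (x1 + s * d1, x2 + s * d2) <= 1 + c * s + eps / C * Rabs s).
{ intros s Hs. specialize (Hd s Hs). simpl in Hd.
  replace (x1 + 0 * d1, x2 + 0 * d2) with (x1, x2) in Hd by (f_equal; ring).
  rewrite Hx in Hd. pose proof (Rle_abs (N (x1 + s * d1, x2 + s * d2) - 1 - c * s)). lra. }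
exists (Rmin 1 del / C). split; [apply Rdiv_lt_0_compat; [apply Rmin_pos|]; lra|].
intros h1 h2 Hh.
destruct (cramer x1 x2 d1 d2 h1 h2 HD) as [Eh1 Eh2].
pose proof (cramer_bound x1 x2 d1 d2 h1 h2 HD) as Hbound.
set (al := det (h1, h2) (d1, d2) / det (x1, x2) (d1, d2)) in *.
set (be := det (x1, x2) (h1, h2) / det (x1, x2) (d1, d2)) in *.
set (r := Rabs al + Rabs be) in *.
assert (Hr : r <= (C - 1) * (Rabs h1 + Rabs h2)) by (unfold C; lra).
pose proof (Rabs_pos h1); pose proof (Rabs_pos h2).
assert (Hrsmall : r < Rmin 1 del).
{ apply (Rmult_lt_compat_l C) in Hh; [|lra].
  replace (C * (Rmin 1 del / C)) with (Rmin 1 del) in Hh by (field; lra). nra. }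
assert (Heps' : 0 <= eps / C) by (apply Rdiv_le_0_compat; lra).
(* upper bounds at [x + h] and [x - h], and [N (x+h) + N (x-h) >= N (2x) = 2] *)
pose proof (norm_upper_in_chart N x1 x2 d1 d2 c (eps / C) del HN Hx Heps' Hupper al be Hrsmall) as U1.
pose proof (norm_upper_in_chart N x1 x2 d1 d2 c (eps / C) del HN Hx Heps' Hupper (- al) (- be))
  as U2.
rewrite !Rabs_Ropp in U2. specialize (U2 Hrsmall). fold r in U1, U2.
pose proof (norm_add N HN (x1 + (al * x1 + be * d1)) (x2 + (al * x2 + be * d2))
              (x1 + (- al * x1 + - be * d1)) (x2 + (- al * x2 + - be * d2))) as T.
replace (x1 + (al * x1 + be * d1) + (x1 + (- al * x1 + - be * d1)),
         x2 + (al * x2 + be * d2) + (x2 + (- al * x2 + - be * d2)))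
  with (2 * x1, 2 * x2) in T by (f_equal; ring).
rewrite norm_scal, Hx, Rabs_pos_eq in T by (auto; lra).
rewrite <- Eh1, <- Eh2 in U1, T. rewrite Hx.
replace ((d2 - c * x2) / det (x1, x2) (d1, d2) * h1 + (c * x1 - d1) / det (x1, x2) (d1, d2) * h2)
  with (al + c * be) by (unfold al, be; unfold det in *; simpl in *; field; exact HD).
assert (eps / C * r <= eps * (Rabs h1 + Rabs h2)).
{ apply Rle_trans with (eps / C * (C * (Rabs h1 + Rabs h2))).
  - apply Rmult_le_compat_l; [lra|nra].
  - right. field. lra. }
apply Rabs_le. lra.
Qed.

Lemma gradient_iff_line_deriv N x1 x2 d1 d2 : is_norm N -> N (x1, x2) = 1 ->
  det (x1, x2) (d1, d2) <> 0 ->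
  (exists a b, has_gradient N x1 x2 a b) <->
  (exists c, has_deriv0 (fun s => N (x1 + s * d1, x2 + s * d2)) c).
Proof.
intros HN Hx HD. split.
- intros [a [b Hgrad]]. eexists. exact (gradient_along_line N x1 x2 d1 d2 a b Hgrad).
- intros [c Hline]. do 2 eexists. exact (gradient_from_line_deriv N x1 x2 d1 d2 c HN Hx HD Hline).
Qed.

(** If the curve has tangent [d] at [y + lam x], then to first order
    [N (g t - y) = N (lam x + t d) = lam N (x + (t/lam) d)], so its derivative
    at 0 exists iff [N] is differentiable at [x] along [d]. *)
Lemma distance_deriv_iff_line_deriv N g1 g2 y1 y2 x1 x2 d1 d2 lam c :
  is_norm N -> 0 < lam ->
  tangent_on (fun _ => True) g1 g2 (y1 + lam * x1) (y2 + lam * x2) d1 d2 ->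
  has_deriv0 (fun t => N (g1 t - y1, g2 t - y2)) c <->
  has_deriv0 (fun s => N (x1 + s * d1, x2 + s * d2)) c.
Proof.
intros HN Hlam Htan.
assert (Hclose : first_order_eq (fun t => N (g1 t - y1, g2 t - y2))
                   (fun t => lam * N (x1 + t / lam * d1, x2 + t / lam * d2))).
{ intros eps Heps. set (K := lip_const N). pose proof (lip_const_nonneg N HN) as HK.
  destruct (Htan (eps / (K + 1)) ltac:(apply Rdiv_lt_0_compat; unfold K; lra))
    as [del [Hdel Hd]].
  exists del. split; [exact Hdel|]. intros t Ht. specialize (Hd t I Ht).
  replace (lam * N (x1 + t / lam * d1, x2 + t / lam * d2))
    with (N (lam * x1 + t * d1, lam * x2 + t * d2)).
  2:{ replace (lam * x1 + t * d1, lam * x2 + t * d2)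
        with (lam * (x1 + t / lam * d1), lam * (x2 + t / lam * d2)) by (f_equal; field; lra).
      rewrite norm_scal, Rabs_pos_eq by (auto; lra). reflexivity. }
  eapply Rle_trans; [apply norm_lipschitz; exact HN|]. fold K.
  replace (g1 t - y1 - (lam * x1 + t * d1)) with (g1 t - (y1 + lam * x1) - t * d1) by ring.
  replace (g2 t - y2 - (lam * x2 + t * d2)) with (g2 t - (y2 + lam * x2) - t * d2) by ring.
  apply Rle_trans with (K * (eps / (K + 1) * Rabs t)); [apply Rmult_le_compat_l; [exact HK|exact Hd]|].
  apply Rle_trans with ((K + 1) * (eps / (K + 1) * Rabs t)).
  - apply Rmult_le_compat_r; [|lra].
    apply Rmult_le_pos; [apply Rdiv_le_0_compat; unfold K; lra|apply Rabs_pos].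
  - right. field. unfold K; lra. }
rewrite <- (has_deriv0_rescale_iff (fun s => N (x1 + s * d1, x2 + s * d2)) c lam Hlam).
split.
- apply has_deriv0_first_order. exact Hclose.
- apply has_deriv0_first_order. exact (first_order_eq_sym _ _ Hclose).
Qed.

(** At a point [z] where [N] has gradient [(a,b)], the one-sided unit tangents
    of [gamma_z] coincide, so [gamma_z] has a two-sided tangent [p] at [0],
    with [N p = 1] and [a.p = 0]. *)
Lemma tangent_at_smooth_point N z1 z2 a b L g : is_norm N -> N (z1, z2) = 1 ->
  has_gradient N z1 z2 a b -> natural_param N (z1, z2) L g ->
  exists p1 p2, N (p1, p2) = 1 /\ a * p1 + b * p2 = 0 /\
    tangent_on (fun _ => True) (fun t => fst (g t)) (fun t => snd (g t)) z1 z2 p1 p2.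
Proof.
intros HN Hz Hgrad (_ & Hg0 & _ & Hsphere & _ & _ & _ & Hder).
destruct (Hder 0) as [[m1 m2] [[p1 p2] (Hleft & Hright & Nm & Np & Dm & Dp)]].
rewrite Hg0 in Dm, Dp.
pose proof (tangent_of_quotient_limit g (fun t => 0 < t) (p1, p2) ltac:(intros; lra) Hright)
  as Tright.
pose proof (tangent_of_quotient_limit g (fun t => t < 0) (m1, m2) ltac:(intros; lra) Hleft)
  as Tleft.
rewrite Hg0 in Tright, Tleft. simpl in Tright, Tleft.
assert (Hlevel : forall t, N (fst (g t), snd (g t)) = N (z1, z2)).
{ intros t. rewrite <- surjective_pairing, Hsphere, Hz. reflexivity. }
assert (Hap : a * p1 + b * p2 = 0).
{ apply (gradient_orthogonal_to_tangent N z1 z2 a b (fun t => 0 < t)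
           (fun t => fst (g t)) (fun t => snd (g t)) p1 p2 Hgrad Hlevel); [|exact Tright].
  intros del Hdel. exists (del / 2). rewrite Rabs_pos_eq; lra. }
assert (Ham : a * m1 + b * m2 = 0).
{ apply (gradient_orthogonal_to_tangent N z1 z2 a b (fun t => t < 0)
           (fun t => fst (g t)) (fun t => snd (g t)) m1 m2 Hgrad Hlevel); [|exact Tleft].
  intros del Hdel. exists (- (del / 2)). rewrite Rabs_Ropp, Rabs_pos_eq; lra. }
pose proof (gradient_euler N z1 z2 a b HN Hgrad) as Heuler. rewrite Hz in Heuler.
destruct (unit_tangents_equal N z1 z2 a b p1 p2 m1 m2 HN Heuler Hap Ham Np Nm Dm Dp) as [-> ->].
exists p1, p2. repeat split; auto.
apply tangent_two_sided; auto; rewrite Hg0; reflexivity.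
Qed.

Theorem proposition2 :
  forall (N : R * R -> R), is_norm N -> strictly_convex N ->
  forall (x y z : R * R) (lam : R),
    N x = 1 -> N y = 1 -> N z = 1 ->
    0 < lam < 2 ->
    z = plus y (scal lam x) ->
    ex_filterdiff N (locally z) ->
    forall (L : R) (g : R -> R * R), natural_param N z L g ->
    (ex_filterdiff N (locally x) <-> ex_derive (fun t => N (minus (g t) y)) 0).
Proof.
intros N HN HSC [x1 x2] [y1 y2] [z1 z2] lam Hx Hy Hz Hlam Hzyx Hdz L g Hg.
change (plus (y1, y2) (scal lam (x1, x2))) with (y1 + lam * x1, y2 + lam * x2) in Hzyx.
injection Hzyx as -> ->.
destruct (gradient_of_filterdiff N _ _ Hdz) as [a [b Hgrad]].
destruct (tangent_at_smooth_point N _ _ a b L g HN Hz Hgrad Hg) as (p1 & p2 & Hp & Hap & Htan).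
pose proof (chord_direction_off_tangent N x1 x2 y1 y2 a b lam HN HSC Hx Hy Hz
              ltac:(lra) Hgrad) as Hax.
pose proof (transversal_direction a b p1 p2 x1 x2 (unit_nonzero N HN p1 p2 Hp) Hap Hax) as Hdet.
assert (HG : forall t, N (fst (g t) - y1, snd (g t) - y2) = N (minus (g t) (y1, y2)))
  by (intros t; destruct (g t); reflexivity).
rewrite filterdiff_iff_gradient, (gradient_iff_line_deriv N x1 x2 p1 p2 HN Hx Hdet), ex_derive0_iff.
split; intros [c Hc]; exists c.
- apply (has_deriv0_ext _ _ c HG).
  apply (distance_deriv_iff_line_deriv N _ _ y1 y2 x1 x2 p1 p2 lam c HN ltac:(lra) Htan), Hc.
- apply (distance_deriv_iff_line_deriv N _ _ y1 y2 x1 x2 p1 p2 lam c HN ltac:(lra) Htan).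
  apply (has_deriv0_ext _ _ c (fun t => eq_sym (HG t)) Hc).
Qed.
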